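(* Let $A,B$ be commutative rings with identity, $f:A\to B$ a ring homomorphism and $J$ an ideal of $B$, regarded as an $A$-module via $f$. (a) Assume that $A$ is Cohen–Macaulay in the sense of ideals and that $\operatorname{Kgrade}_A(\mathfrak a,J)\ge\operatorname{ht}\mathfrak a$ for every ideal $\mathfrak a$ of $A$. Then for every ideal $\mathfrak a$ of $A$, $$\operatorname{Kgrade}_{A\bowtie^f J}(\mathfrak a^e,A\bowtie^f J)=\operatorname{Kgrade}_A(\mathfrak a,A)\le\operatorname{Kgrade}_A(\mathfrak a,J).$$ (b) The same holds with ''ideal'' replaced throughout by ''finitely generated ideal'': if $A$ is Cohen–Macaulay in the sense of finitely generated ideals and $\operatorname{Kgrade}_A(\mathfrak a,J)\ge\operatorname{ht}\mathfrak a$ for every finitely generated ideal $\mathfrak a$ of $A$, then the displayed relation holds for every finitely generated ideal $\mathfrak a$ of $A$.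
   Context: The amalgamation is the subring $A\bowtie^fJ=\{(a,f(a)+j): a\in A,\ j\in J\}$ of $A\times B$; $\iota_A:A\to A\bowtie^fJ$, $\iota_A(x)=(x,f(x))$, and for an ideal $\mathfrak a$ of $A$, $\mathfrak a^e=\iota_A(\mathfrak a)(A\bowtie^fJ)$. Koszul grade: for a ring $R$, an $R$-module $M$ and a finitely generated ideal $\mathfrak b=(x_1,\dots,x_\ell)$, $\operatorname{Kgrade}_R(\mathfrak b,M)=\inf\{i\ge0: H^i(\operatorname{Hom}_R(\mathbb K_\bullet(x_1,\dots,x_\ell),M))\ne0\}$ ($\inf\emptyset=\infty$), independent of generators; for an arbitrary ideal $\mathfrak a$, $\operatorname{Kgrade}_R(\mathfrak a,M)=\sup$ of $\operatorname{Kgrade}_R(\mathfrak b,M)$ over finitely generated ideals $\mathfrak b\subseteq\mathfrak a$. The height of an ideal $\mathfrak a$ of $R$ is $\operatorname{ht}\mathfrak a=\inf\{\dim R_\mathfrak p:\mathfrak p\in\operatorname{Spec}R,\ \mathfrak a\subseteq\mathfrak p\}$. For a nonempty class $\mathcal C$ of ideals of $R$, $R$ is Cohen–Macaulay in the sense of $\mathcal C$ if $\operatorname{ht}\mathfrak a=\operatorname{Kgrade}_R(\mathfrak a,R)$ for all $\mathfrak a\in\mathcal C$; ''in the sense of ideals'' (resp. ''finitely generated ideals'') refers to the class of all (resp. all finitely generated) ideals. *)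

From HB Require Import structures.
From mathcomp Require Import all_boot all_algebra.
From Stdlib Require Import ClassicalEpsilon.
Set Implicit Arguments. Unset Strict Implicit. Unset Printing Implicit Defensive.
Import GRing.Theory.
Local Open Scope ring_scope.

(** * Extended naturals  N ∪ {∞}  (None = ∞), with glb/lub *)
Definition enat := option nat.
Definition ele (x y : enat) : Prop :=
  match y with
  | None => True
  | Some n => match x with None => False | Some m => (m <= n)%N end
  end.
Definition is_glb (S : enat -> Prop) (x : enat) :=
  (forall y, S y -> ele x y) /\ (forall z, (forall y, S y -> ele z y) -> ele z x).
Definition is_lub (S : enat -> Prop) (x : enat) :=
  (forall y, S y -> ele y x) /\ (forall z, (forall y, S y -> ele y z) -> ele x z).
(** infimum (inf of the empty set is ∞) and supremum in the complete lattice enat *)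
Definition einf (S : enat -> Prop) : enat := epsilon (inhabits None) (is_glb S).
Definition esup (S : enat -> Prop) : enat := epsilon (inhabits (Some 0%N)) (is_lub S).

Definition is_ideal (R : comPzRingType) (I : R -> Prop) : Prop :=
  I 0 /\ (forall x y, I x -> I y -> I (x + y)) /\ (forall r x, I x -> I (r * x)).

Definition is_prime_ideal (R : comPzRingType) (p : R -> Prop) : Prop :=
  is_ideal p /\ ~ p 1 /\ (forall x y, p (x * y) -> p x \/ p y).

Definition fg_ideal (R : comPzRingType) (I : R -> Prop) : Prop :=
  exists n (x : 'I_n -> R), forall y, I y <-> exists r : 'I_n -> R, y = \sum_i r i * x i.

Definition prime_chain (R : comPzRingType) (n : nat) (c : nat -> R -> Prop) : Prop :=
  (forall i, (i <= n)%N -> is_prime_ideal (c i)) /\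
  (forall i, (i < n)%N ->
     (forall y, c i y -> c i.+1 y) /\ exists y, c i.+1 y /\ ~ c i y).

Definition prime_height (R : comPzRingType) (p : R -> Prop) : enat :=
  esup (fun h => exists n (c : nat -> R -> Prop),
          h = Some n /\ prime_chain n c /\ forall y, c n y <-> p y).

Definition height (R : comPzRingType) (a : R -> Prop) : enat :=
  einf (fun h => exists p : R -> Prop,
          is_prime_ideal p /\ (forall y, a y -> p y) /\ h = prime_height p).

(** * Koszul cohomology  H^i(Hom_R(K(x_0..x_{l-1}), M))
   M is a submodule (predicate) of a ring T, R acting through g : R -> T.
   Hom_R(K_i, M) = functions on i-subsets of 'I_l with values in M. *)
Definition koszul_cochain (T : comPzRingType) (M : T -> Prop) (l i : nat)
  (phi : {set 'I_l} -> T) : Prop :=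
  (forall S, M (phi S)) /\ (forall S : {set 'I_l}, #|S| != i -> phi S = 0).

Definition koszul_diff (R T : comPzRingType) (g : R -> T) (l : nat) (x : 'I_l -> R)
  (phi : {set 'I_l} -> T) : {set 'I_l} -> T :=
  fun S => \sum_(j in S) (-1) ^+ #|[set k in S | (k < j)%N]| * g (x j) * phi (S :\ j).

Definition koszul_cohom_nonzero (R T : comPzRingType) (g : R -> T) (M : T -> Prop)
  (l : nat) (x : 'I_l -> R) (i : nat) : Prop :=
  exists phi, koszul_cochain M i phi /\ (forall S, koszul_diff g x phi S = 0) /\
   ~ ((forall S, phi S = 0) \/
      ((0 < i)%N /\ exists psi, koszul_cochain M i.-1 psi /\
                                 forall S, koszul_diff g x psi S = phi S)).

Definition Kgrade_seq (R T : comPzRingType) (g : R -> T) (M : T -> Prop)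
  (l : nat) (x : 'I_l -> R) : enat :=
  einf (fun h => exists i, h = Some i /\ koszul_cohom_nonzero g M x i).

Definition Kgrade (R T : comPzRingType) (g : R -> T) (M : T -> Prop) (a : R -> Prop) : enat :=
  esup (fun h => exists l (x : 'I_l -> R), (forall j, a (x j)) /\ h = Kgrade_seq g M x).

Definition CM_in (R : comPzRingType) (C : (R -> Prop) -> Prop) : Prop :=
  forall a, C a -> height a = Kgrade (fun r : R => r) (fun _ => True) a.

Definition amalg (A B : comPzRingType) (f : A -> B) (J : B -> Prop) : A * B -> Prop :=
  fun z => exists j, J j /\ z.2 = f z.1 + j.

Definition ext_ideal (A B : comPzRingType) (f : A -> B) (J : B -> Prop) (a : A -> Prop)
  : A * B -> Prop :=
  fun y => exists n (u : 'I_n -> A) (s : 'I_n -> A * B),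
    (forall i, a (u i)) /\ (forall i, amalg f J (s i)) /\
    y = \sum_i ((u i, f (u i)) : A * B) * s i.

(* Through the A-module isomorphism A ⋈^f J ≅ A ⊕ J, (a, f a + j) ↦ (a, j), the
   Koszul complex of A ⋈^f J on ι_A(x) is the direct sum of the Koszul complexes of
   A and of J on x, so Kgrade(ι_A(x), A ⋈^f J) = min(Kgrade(x, A), Kgrade(x, J)).
   The Koszul grade of a sequence does not drop when an element is appended (long
   exact sequence) and does not grow when a combination of its terms is adjoined
   (multiplication by such a combination is null-homotopic); hence it is monotone
   in the generated ideal.  Every finite subset of a^e lies in the ideal generated by
   ι_A(x) for a finite x in a, so Kgrade(a^e) ≤ Kgrade_A(a, A), with equality once
   Kgrade_A(a, A) ≤ Kgrade_A(a, J); the Cohen–Macaulay hypothesis gives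
   Kgrade_A(a, A) = ht a ≤ Kgrade_A(a, J). *)

From mathcomp Require Import all_boot all_algebra ring.
From Stdlib Require Import Classical ClassicalEpsilon FunctionalExtensionality Wf_nat.
Set Implicit Arguments. Unset Strict Implicit. Unset Printing Implicit Defensive.
Import GRing.Theory.
Local Open Scope ring_scope.

Lemma ele_refl x : ele x x.
Proof. by case: x => //= n. Qed.

Lemma ele_trans y x z : ele x y -> ele y z -> ele x z.
Proof. by case: z => [c|] //; case: y => [b|] //; case: x => [a|] //; apply: leq_trans. Qed.

Lemma ele_anti x y : ele x y -> ele y x -> x = y.
Proof. by case: x => [a|]; case: y => [b|] //= ab ba; rewrite (@anti_leq a b) ?ab. Qed.

Lemma ele_None x : ele x None.
Proof. by case: x. Qed.

Lemma ele_Some_ext u v : (forall k, ele (Some k) u -> ele (Some k) v) -> ele u v.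
Proof.
case: u => [m|] H; first exact/H/leqnn.
by case: v H => [n|] // /(_ n.+1 I); rewrite /= ltnn.
Qed.

Lemma least_nat (P : nat -> Prop) :
  (exists n, P n) -> exists m, P m /\ forall k, P k -> (m <= k)%N.
Proof.
move=> exP; have [m [[Pm mmin] _]] :=
  dec_inh_nat_subset_has_unique_least_element P (fun n => classic (P n)) exP.
by exists m; split => // k /mmin /leP.
Qed.

Lemma einf_spec S : is_glb S (einf S).
Proof.
apply: epsilon_spec; have [[n Sn]|noS] := classic (exists n, S (Some n)).
  have [m [Sm mmin]] := least_nat (ex_intro (fun n => S (Some n)) n Sn).
  by exists (Some m); split => [[k|]|z /(_ _ Sm)] //= /mmin.
exists None; split => [[k|] // Sk|z _]; last exact: ele_None.
by case: noS; exists k.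
Qed.

Lemma esup_spec S : is_lub S (esup S).
Proof.
apply: epsilon_spec.
have [bounded|unbounded] := classic (exists N, forall y, S y -> ele y (Some N)).
  have [m [ub mmin]] := least_nat bounded.
  by exists (Some m); split => // [[k|]] //= /mmin.
exists None; split => [y _|[k|] ub //]; first exact: ele_None.
by case: unbounded; exists k.
Qed.

Lemma ele_Some_einf (P : nat -> Prop) k :
  ele (Some k) (einf (fun h => exists i, h = Some i /\ P i)) <->
  forall i, P i -> (k <= i)%N.
Proof.
have [lb glb] := einf_spec (fun h => exists i, h = Some i /\ P i).
split => [kle i Pi | kmin]; last by apply: glb => _ [i [-> /kmin]].
exact: ele_trans kle (lb _ (ex_intro _ i (conj erefl Pi))).
Qed.

Section KgradeBounds.
Variables (R T : comPzRingType) (g : R -> T) (M : T -> Prop).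

Lemma Kgrade_seq_geP l (x : 'I_l -> R) k :
  ele (Some k) (Kgrade_seq g M x) <->
  forall i, koszul_cohom_nonzero g M x i -> (k <= i)%N.
Proof. exact: ele_Some_einf. Qed.

Lemma Kgrade_seq_le_Kgrade (a : R -> Prop) l (x : 'I_l -> R) :
  (forall j, a (x j)) -> ele (Kgrade_seq g M x) (Kgrade g M a).
Proof. by move=> ax; apply: (proj1 (esup_spec _)); exists l, x. Qed.

Lemma Kgrade_le (a : R -> Prop) z :
  (forall l (x : 'I_l -> R), (forall j, a (x j)) -> ele (Kgrade_seq g M x) z) ->
  ele (Kgrade g M a) z.
Proof. by move=> ub; apply: (proj2 (esup_spec _)) => _ [l [x [/ub ? ->]]]. Qed.

Lemma Kgrade_geP (a : R -> Prop) k : ele (Some k) (Kgrade g M a) ->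
  exists l (x : 'I_l -> R), (forall j, a (x j)) /\ ele (Some k) (Kgrade_seq g M x).
Proof.
move=> kle; apply: NNPP; case: k kle => [|k] kle nox.
  apply: nox; exists 0%N, (fun _ => 0).
  by split => [[]|]; case: (Kgrade_seq g M (fun _ : 'I_0 => 0)).
suff : ele (Kgrade g M a) (Some k) by move/(ele_trans kle); rewrite /= ltnn.
apply: Kgrade_le => l x ax; case E: (Kgrade_seq g M x) => [m|]; apply: NNPP => km;
  by apply: nox; exists l, x; rewrite E; split => //=; rewrite ltnNge; apply/negP.
Qed.

End KgradeBounds.

Lemma Kgrade_seq_comp (R T : comPzRingType) (g : R -> T) (M : T -> Prop) l (x : 'I_l -> R) :
  Kgrade_seq g M x = Kgrade_seq (fun t => t) M (fun j => g (x j)).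
Proof. by []. Qed.

Section LiftSets.
Variables (n : nat) (p : 'I_n.+1).
Implicit Types (X : {set 'I_n}) (S : {set 'I_n.+1}).

Lemma ltn_lift (i j : 'I_n) : (lift p i < lift p j)%N = (i < j)%N.
Proof. by rewrite /= !ltnNge leq_bump2. Qed.

Lemma notin_imset_lift X : p \notin lift p @: X.
Proof. by apply/imsetP => -[j _ /eqP]; rewrite (negbTE (neq_lift p j)). Qed.

Lemma preimset_lift_imset X : lift p @^-1: (lift p @: X) = X.
Proof. by apply/setP => i; rewrite inE mem_imset //; apply: lift_inj. Qed.

Lemma preimset_lift_setU1 X : lift p @^-1: (p |: lift p @: X) = X.
Proof.
apply/setP => i; rewrite !inE mem_imset; last exact: lift_inj.
by rewrite eq_sym (negbTE (neq_lift p i)).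
Qed.

Lemma imset_lift_preimset S : p \notin S -> lift p @: (lift p @^-1: S) = S.
Proof.
move=> pS; apply/setP => i; apply/imsetP/idP => [[j]|iS]; first by rewrite inE => ? ->.
have /unlift_some [j ij _] : p != i by apply: contraNneq pS => ->.
by exists j; rewrite // inE -ij.
Qed.

Lemma setU1_imset_lift_preimset S : p \in S -> p |: lift p @: (lift p @^-1: S) = S.
Proof.
move=> pS; apply/setP => i; rewrite in_setU1; case: (eqVneq i p) => [-> //|ip /=].
apply/imsetP/idP => [[j]|iS]; first by rewrite inE => ? ->.
have /unlift_some [j ij _] : p != i by rewrite eq_sym.
by exists j; rewrite // inE -ij.
Qed.

Lemma set_lift_ind (P : {set 'I_n.+1} -> Prop) :
  (forall X, P (lift p @: X)) -> (forall X, P (p |: lift p @: X)) -> forall S, P S.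
Proof.
move=> P0 P1 S; case: (boolP (p \in S)) => pS.
  by rewrite -(setU1_imset_lift_preimset pS).
by rewrite -(imset_lift_preimset pS).
Qed.

Lemma card_imset_lift X : #|lift p @: X| = #|X|.
Proof. by rewrite card_imset //; apply: lift_inj. Qed.

Lemma card_setU1_imset_lift X : #|p |: lift p @: X| = #|X|.+1.
Proof. by rewrite cardsU1 notin_imset_lift card_imset_lift. Qed.

Lemma imset_lift_setD1 X (j : 'I_n) : (lift p @: X) :\ lift p j = lift p @: (X :\ j).
Proof.
apply/setP => k; rewrite !inE; apply/andP/imsetP => [[kj /imsetP [i iX ki]]|[i]].
  by exists i; rewrite // !inE iX andbT; apply: contraNneq kj => <-; rewrite ki.
by rewrite !inE => /andP [ij iX] ->; rewrite (inj_eq (@lift_inj _ p)) ij imset_f.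
Qed.

Lemma card_imset_lift_ltn X (j : 'I_n) :
  #|[set k in lift p @: X | (k < lift p j)%N]| = #|[set k in X | (k < j)%N]|.
Proof.
rewrite -(card_imset_lift [set k in X | (k < j)%N]); congr #|pred_of_set _|.
apply/setP => k; rewrite inE; apply/andP/imsetP => [[/imsetP [i iX ->]]|[i]].
  by rewrite ltn_lift => ij; exists i; rewrite // inE iX.
by rewrite inE => /andP [iX ij] ->; rewrite ltn_lift ij imset_f.
Qed.

End LiftSets.

Lemma card_sep_setU1 (I : finType) (X : {set I}) k (P : pred I) :
  k \notin X -> #|[set m in k |: X | P m]| = (P k + #|[set m in X | P m]|)%N.
Proof.
move=> kX; case Pk: (P k).
  have -> : [set m in k |: X | P m] = k |: [set m in X | P m].
    by apply/setP => m; rewrite !inE; case: eqP => [->|]; rewrite ?Pk ?orbT.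
  by rewrite cardsU1 inE (negbTE kX).
congr #|pred_of_set _|; apply/setP => m; rewrite !inE.
by case: eqP => [->|]; rewrite ?Pk ?andbF.
Qed.

Lemma setCD1 (I : finType) (Y : {set I}) j : j \in Y -> ~: (Y :\ j) = j |: ~: Y.
Proof. by move=> jY; apply/setP => m; rewrite !inE; case: (eqVneq m j) => [->|]. Qed.

Lemma setU1D1 (I : finType) (Y : {set I}) j k : j != k -> (k |: Y) :\ j = k |: (Y :\ j).
Proof.
move=> jk; apply/setP => m; rewrite !inE.
by case: (eqVneq m j) => [->|]; rewrite ?(negbTE jk) ?andbF.
Qed.

Section InsertGlue.
Variables (U : Type) (n : nat) (p : 'I_n.+1).
Implicit Types X : {set 'I_n}.

Definition insert_at (x : 'I_n -> U) (z : U) : 'I_n.+1 -> U :=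
  fun i => if unlift p i is Some j then x j else z.

Lemma insert_at_lift x z j : insert_at x z (lift p j) = x j.
Proof. by rewrite /insert_at liftK. Qed.

Lemma insert_at_pivot x z : insert_at x z p = z.
Proof. by rewrite /insert_at unlift_none. Qed.

Lemma insert_atE (w : 'I_n.+1 -> U) : insert_at (fun j => w (lift p j)) (w p) = w.
Proof. by apply: functional_extensionality => i; rewrite /insert_at; case: unliftP => [j|] ->. Qed.

Definition glue (psi0 psi1 : {set 'I_n} -> U) : {set 'I_n.+1} -> U :=
  fun S => if p \in S then psi1 (lift p @^-1: S) else psi0 (lift p @^-1: S).

Lemma glue_lift psi0 psi1 X : glue psi0 psi1 (lift p @: X) = psi0 X.
Proof. by rewrite /glue (negbTE (notin_imset_lift _ _)) preimset_lift_imset. Qed.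

Lemma glue_setU1 psi0 psi1 X : glue psi0 psi1 (p |: lift p @: X) = psi1 X.
Proof. by rewrite /glue setU11 preimset_lift_setU1. Qed.

Lemma glueE (phi : {set 'I_n.+1} -> U) :
  glue (fun X => phi (lift p @: X)) (fun X => phi (p |: lift p @: X)) = phi.
Proof.
apply: functional_extensionality => S; elim/(@set_lift_ind _ p): S => X.
  by rewrite glue_lift.
by rewrite glue_setU1.
Qed.

End InsertGlue.

Definition koszul_cocycle (R T : comPzRingType) (g : R -> T) l (x : 'I_l -> R)
  (phi : {set 'I_l} -> T) : Prop :=
  forall S, koszul_diff g x phi S = 0.

(* The (i-1)-cochains, where the only (-1)-cochain is 0. *)
Definition koszul_prev_cochain (T : comPzRingType) (M : T -> Prop) l i
  (psi : {set 'I_l} -> T) : Prop :=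
  (forall S, M (psi S)) /\ (forall S : {set 'I_l}, #|S|.+1 != i -> psi S = 0).

Lemma koszul_cocycle0 (R T : comPzRingType) (g : R -> T) l (x : 'I_l -> R) :
  koszul_cocycle g x (fun _ => 0).
Proof. by move=> S; rewrite /koszul_diff big1 // => j _; rewrite mulr0. Qed.

Section KoszulDifferential.
Variable T : comPzRingType.
Implicit Types l n : nat.

Local Notation d := (koszul_diff (fun r : T => r)).

Definition ksign l (Y : {set 'I_l}) (j : 'I_l) : T := (-1) ^+ #|[set m in Y | (m < j)%N]|.

Lemma koszul_diffE l (x : 'I_l -> T) phi Y :
  d x phi Y = \sum_(j in Y) ksign Y j * x j * phi (Y :\ j).
Proof. by []. Qed.

Lemma ksign_setD1 l (Y : {set 'I_l}) j : ksign (Y :\ j) j = ksign Y j.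
Proof.
rewrite /ksign; congr (_ ^+ #|pred_of_set _|); apply/setP => m; rewrite !inE.
by case: (eqVneq m j) => [->|]; rewrite ?ltnn ?andbF.
Qed.

Lemma ksign_setU1 l (Y : {set 'I_l}) k j :
  k \notin Y -> ksign (k |: Y) j = (-1) ^+ (k < j)%N * ksign Y j.
Proof. by move=> kY; rewrite /ksign card_sep_setU1 // exprD. Qed.

Lemma ksign_sqr l (Y : {set 'I_l}) j : ksign Y j * ksign Y j = 1.
Proof. by rewrite -exprMn mulrNN mulr1 expr1n. Qed.

Lemma ksign_swap l (Y : {set 'I_l}) j k : j \in Y -> k \notin Y ->
  ksign Y k * ksign (k |: Y) j = - (ksign Y j * ksign (Y :\ j) k).
Proof.
move=> jY kY; rewrite -{1}(setD1K jY) !ksign_setU1 ?inE ?eqxx //.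
have jk : j != k by apply: contraNneq kY => <-.
case: (ltngtP j k) => [_|_|/val_inj jkE]; last by rewrite jkE eqxx in jk.
  by rewrite /= expr1 expr0; ring.
by rewrite /= expr1 expr0; ring.
Qed.

Lemma koszul_diff_linear l (x : 'I_l -> T) phi psi a X :
  d x (fun Y => phi Y + a * psi Y) X = d x phi X + a * d x psi X.
Proof. by rewrite !koszul_diffE mulr_sumr -big_split; apply: eq_bigr => j _ /=; ring. Qed.

Definition koszul_homotopy l (c : 'I_l -> T) (phi : {set 'I_l} -> T) (Y : {set 'I_l}) : T :=
  \sum_(k in ~: Y) ksign Y k * c k * phi (k |: Y).

Lemma koszul_diff_homotopy l (x c : 'I_l -> T) phi : koszul_cocycle id x phi ->
  forall Y, d x (koszul_homotopy c phi) Y = (\sum_k c k * x k) * phi Y.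
Proof.
move=> cyc Y.
pose F j k := ksign Y j * x j * (ksign (Y :\ j) k * c k * phi (k |: (Y :\ j))).
have diag : forall k, ksign Y k * c k * (ksign Y k * x k * phi Y) = c k * x k * phi Y.
  by move=> k; rewrite -[RHS]mul1r -(ksign_sqr Y k); ring.
have rowY : forall j, j \in Y -> ksign Y j * x j * koszul_homotopy c phi (Y :\ j) =
    c j * x j * phi Y + \sum_(k in ~: Y) F j k.
  move=> j jY; rewrite /koszul_homotopy setCD1 // big_setU1 ?inE ?jY //=.
  by rewrite mulrDr mulr_sumr ksign_setD1 (setD1K jY) -diag; congr (_ + _); ring.
have colY : forall k, k \in ~: Y -> \sum_(j in Y) F j k = c k * x k * phi Y.
  move=> k; rewrite inE => kY.
  have := congr1 (fun t => ksign Y k * c k * t) (cyc (k |: Y)).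
  rewrite /= mulr0 koszul_diffE big_setU1 //= setU1K // ksign_setU1 // ltnn expr0 mul1r.
  rewrite mulrDr diag mulr_sumr (eq_bigr (fun j => - F j k)) ?sumrN.
    by move/eqP; rewrite subr_eq0 => /eqP ->.
  move=> j jY; have jk : j != k by apply: contraNneq kY => <-.
  rewrite setU1D1 // /F.
  transitivity (ksign Y k * ksign (k |: Y) j * (c k * x j * phi (k |: (Y :\ j)))); first ring.
  by rewrite ksign_swap //; ring.
rewrite koszul_diffE (eq_bigr _ rowY) big_split /= exchange_big /= (eq_bigr _ colY).
rewrite mulr_suml [RHS](bigID (fun k => k \in Y)) /=.
by congr (_ + _); apply: eq_bigl => k; rewrite inE.
Qed.

Section Split.
Variables (n : nat) (p : 'I_n.+1) (x : 'I_n -> T) (z : T) (psi0 psi1 : {set 'I_n} -> T).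
Local Notation w := (insert_at p x z).
Local Notation psi := (glue p psi0 psi1).
Implicit Type X : {set 'I_n}.

Lemma koszul_diff_glue_lift X : d w psi (lift p @: X) = d x psi0 X.
Proof.
rewrite !koszul_diffE big_imset /=; last by move=> i j _ _; apply: lift_inj.
apply: eq_bigr => j _.
by rewrite /ksign card_imset_lift_ltn insert_at_lift imset_lift_setD1 glue_lift.
Qed.

Lemma koszul_diff_glue_setU1 X : d w psi (p |: lift p @: X) =
  (-1) ^+ #|[set k in lift p @: X | (k < p)%N]| * z * psi0 X +
  \sum_(j in X) (-1) ^+ (p < lift p j)%N * ksign X j * x j * psi1 (X :\ j).
Proof.
rewrite koszul_diffE big_setU1 /= ?notin_imset_lift //; congr (_ + _).
  rewrite /ksign card_sep_setU1 ?notin_imset_lift // ltnn add0n insert_at_pivot.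
  by rewrite setU1K ?notin_imset_lift // glue_lift.
rewrite big_imset /=; last by move=> i j _ _; apply: lift_inj.
apply: eq_bigr => j _; rewrite ksign_setU1 ?notin_imset_lift // /ksign.
rewrite card_imset_lift_ltn insert_at_lift setU1D1 ?imset_lift_setD1 ?glue_setU1 //.
by rewrite eq_sym neq_lift.
Qed.

End Split.

Lemma koszul_diff_glue_first n (x : 'I_n -> T) z psi0 psi1 (X : {set 'I_n}) :
  d (insert_at ord0 x z) (glue ord0 psi0 psi1) (ord0 |: lift ord0 @: X) =
  z * psi0 X - d x psi1 X.
Proof.
rewrite koszul_diff_glue_setU1.
have -> : [set k in lift ord0 @: X | (k < (@ord0 n))%N] = set0.
  by apply/setP => k; rewrite !inE ltn0 andbF.
rewrite cards0 expr0 mul1r koszul_diffE -sumrN; congr (_ + _).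
by apply: eq_bigr => j _; rewrite /= expr1; ring.
Qed.

Lemma val_lift_max n (j : 'I_n) : lift ord_max j = j :> nat.
Proof. by rewrite /= /bump leqNgt ltn_ord. Qed.

Lemma koszul_diff_glue_last n (x : 'I_n -> T) z psi0 psi1 (X : {set 'I_n}) :
  d (insert_at ord_max x z) (glue ord_max psi0 psi1) (ord_max |: lift ord_max @: X) =
  (-1) ^+ #|X| * z * psi0 X + d x psi1 X.
Proof.
rewrite koszul_diff_glue_setU1.
have -> : [set k in lift ord_max @: X | (k < (@ord_max n))%N] = lift ord_max @: X.
  apply/setP => k; rewrite !inE andb_idr // => /imsetP [j _ ->].
  by rewrite val_lift_max ltn_ord.
rewrite card_imset_lift; congr (_ + _); apply: eq_bigr => j _.
by rewrite val_lift_max ltnNge /= ltnW // expr0 mul1r.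
Qed.

End KoszulDifferential.

Lemma koszul_cohom_zeroP (R T : comPzRingType) (g : R -> T) (M : T -> Prop) (M0 : M 0)
    l (x : 'I_l -> R) i :
  ~ koszul_cohom_nonzero g M x i <->
  forall phi, koszul_cochain M i phi -> koszul_cocycle g x phi ->
    exists2 psi, koszul_prev_cochain M i psi & koszul_diff g x psi =1 phi.
Proof.
split => [nz phi cphi zphi | exact_i [phi [cphi [zphi []]]]].
  apply: NNPP => nopsi; apply: nz; exists phi; do 2!split => //.
  case=> [phi0 | [i_gt0 [psi [[Mpsi psi0] dpsi]]]]; apply: nopsi.
    by exists (fun _ => 0) => // S; rewrite koszul_cocycle0 phi0.
  by exists psi => //; split => // S; rewrite -(prednK i_gt0) eqSS; apply: psi0.
have [psi [Mpsi psi0] dpsi] := exact_i phi cphi zphi.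
case: (posnP i) => [i0|i_gt0].
  left => S; rewrite -dpsi (_ : psi = fun _ => 0) ?koszul_cocycle0 //.
  by apply: functional_extensionality => Y; apply: psi0; rewrite i0.
right; split => //; exists psi; split => //; split => // S hS.
by apply: psi0; rewrite -(prednK i_gt0) eqSS.
Qed.

Section CochainGlue.
Variables (T : comPzRingType) (M : T -> Prop) (i : nat).

Lemma koszul_prev_cochain_cochain l (psi : {set 'I_l} -> T) :
  koszul_prev_cochain M i psi -> koszul_cochain M i.-1 psi.
Proof. by case=> Mpsi psi0; split => // S; case: i psi0 => [|i'] psi0 hS; apply: psi0. Qed.

Lemma koszul_cochain_sign l (phi : {set 'I_l} -> T) (X : {set 'I_l}) a :
  koszul_cochain M i phi -> (-1) ^+ #|X| * a * phi X = (-1) ^+ i * a * phi X.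
Proof. by case=> _ phi0; case: (eqVneq #|X| i) => [-> //|/phi0 ->]; rewrite !mulr0. Qed.

Lemma koszul_prev_cochain_sign l (psi : {set 'I_l} -> T) (X : {set 'I_l}) a :
  koszul_prev_cochain M i psi -> (-1) ^+ #|X| * a * psi X = - (-1) ^+ i * a * psi X.
Proof.
case=> _ psi0; case: (eqVneq #|X|.+1 i) => [<-|/psi0 ->]; last by rewrite !mulr0.
by rewrite exprS; ring.
Qed.

Variables (n : nat) (p : 'I_n.+1) (psi0 psi1 : {set 'I_n} -> T).

Lemma koszul_cochain_glue :
  koszul_cochain M i (glue p psi0 psi1) <->
  koszul_cochain M i psi0 /\ koszul_prev_cochain M i psi1.
Proof.
split => [[Mpsi psi_0] | [[M0 z0] [M1 z1]]].
  (split; split) => X; rewrite -?(glue_lift p psi0 psi1) -?(glue_setU1 p psi0 psi1) //.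
    by move=> hX; apply: psi_0; rewrite card_imset_lift.
  by move=> hX; apply: psi_0; rewrite card_setU1_imset_lift.
by split; elim/(@set_lift_ind _ p) => X;
  rewrite ?glue_lift ?glue_setU1 ?card_imset_lift ?card_setU1_imset_lift; auto.
Qed.

Lemma koszul_prev_cochain_glue :
  koszul_prev_cochain M i (glue p psi0 psi1) <->
  koszul_prev_cochain M i psi0 /\ koszul_prev_cochain M i.-1 psi1.
Proof.
have shift (X : {set 'I_n}) : (#|X|.+2 != i) = (#|X|.+1 != i.-1) by case: i.
split => [[Mpsi psi_0] | [[M0 z0] [M1 z1]]].
  (split; split) => X; rewrite -?(glue_lift p psi0 psi1) -?(glue_setU1 p psi0 psi1) //.
    by move=> hX; apply: psi_0; rewrite card_imset_lift.
  by rewrite -shift => hX; apply: psi_0; rewrite card_setU1_imset_lift.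
by split; elim/(@set_lift_ind _ p) => X;
  rewrite ?glue_lift ?glue_setU1 ?card_imset_lift ?card_setU1_imset_lift ?shift; auto.
Qed.

End CochainGlue.

Section KoszulAdjoin.
Variables (T : comPzRingType) (M : T -> Prop) (Sr : T -> Prop).
Hypothesis M0 : M 0.
Hypothesis MD : forall u v, M u -> M v -> M (u + v).
Hypothesis MN : forall u, M u -> M (- u).
Hypothesis SM : forall s u, Sr s -> M u -> M (s * u).

Local Notation d := (koszul_diff (fun r : T => r)).
Local Notation nz := (koszul_cohom_nonzero (fun r : T => r) M).

Lemma M_sum (I : Type) (r : seq I) (P : pred I) (F : I -> T) :
  (forall i, M (F i)) -> M (\sum_(i <- r | P i) F i).
Proof. by move=> MF; apply: big_ind. Qed.

Lemma M_sign e u : M u -> M ((-1) ^+ e * u).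
Proof.
by move=> Mu; elim: e => [|e IH]; rewrite ?expr0 ?mul1r // exprS mulN1r mulNr; apply: MN.
Qed.

Lemma koszul_cohom_nonzero_adjoin_span n (x c : 'I_n -> T) i : (forall k, Sr (c k)) ->
  nz x i -> nz (insert_at ord0 x (\sum_k c k * x k)) i.
Proof.
move=> Sc nzx; apply: NNPP => /(koszul_cohom_zeroP _ M0) exact_i; move: nzx.
apply/(koszul_cohom_zeroP _ M0) => phi0 cphi0 zphi0.
have [||Psi] := exact_i (glue ord0 phi0 (koszul_homotopy c phi0)).
- apply/koszul_cochain_glue; split=> //; split => X.
    by apply: M_sum => k; rewrite -mulrA; apply/M_sign/SM/(proj1 cphi0).
  move=> hX; rewrite /koszul_homotopy big1 // => k; rewrite inE => kX.
  by rewrite (proj2 cphi0) ?mulr0 // cardsU1 kX.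
- elim/(@set_lift_ind _ (@ord0 n)) => X; first by rewrite koszul_diff_glue_lift.
  by rewrite koszul_diff_glue_first koszul_diff_homotopy // subrr.
rewrite -(glueE ord0 Psi) => /koszul_prev_cochain_glue [cPsi0 _] dPsi.
exists (fun X : {set 'I_n} => Psi (lift ord0 @: X)) => // X.
by rewrite -(glue_lift ord0 phi0 (koszul_homotopy c phi0)) -dPsi koszul_diff_glue_lift.
Qed.

Lemma koszul_cohom_zero_adjoin n (x : 'I_n -> T) z i : Sr z ->
  ~ nz x i.-1 -> ~ nz x i -> ~ nz (insert_at ord_max x z) i.
Proof.
move=> Sz /(koszul_cohom_zeroP _ M0) exact_prev /(koszul_cohom_zeroP _ M0) exact_i.
apply/(koszul_cohom_zeroP _ M0) => phi.
rewrite -(glueE ord_max phi).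
set phi0 := fun X => phi _; set phi1 := fun X => phi _.
move=> /koszul_cochain_glue [cphi0 cphi1] zphi.
have zphi0 : koszul_cocycle id x phi0.
  by move=> X; rewrite -(koszul_diff_glue_lift ord_max _ z _ phi1) zphi.
have [psi0 cpsi0 dpsi0] := exact_i phi0 cphi0 zphi0.
(* Correcting [phi1] by [z] times a primitive of [phi0] gives an (i-1)-cocycle of [x];
   a primitive of it is the missing component of a primitive of [phi]. *)
pose phi1' X := phi1 X + (-1) ^+ i * z * psi0 X.
have cphi1' : koszul_prev_cochain M i phi1'.
  split => X.
    by apply: MD (proj1 cphi1 X) _; rewrite -mulrA; apply/M_sign/SM/(proj1 cpsi0).
  by move=> hX; rewrite /phi1' (proj2 cphi1) // (proj2 cpsi0) // mulr0 addr0.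
have zphi1' : koszul_cocycle id x phi1'.
  move=> X; rewrite koszul_diff_linear dpsi0 addrC.
  by rewrite -(koszul_cochain_sign _ _ cphi0) -(koszul_diff_glue_last _ _ phi0) zphi.
have [Psi1 cPsi1 dPsi1] := exact_prev phi1' (koszul_prev_cochain_cochain cphi1') zphi1'.
exists (glue ord_max psi0 Psi1); first exact/koszul_prev_cochain_glue.
elim/(@set_lift_ind _ (@ord_max n)) => X; first by rewrite koszul_diff_glue_lift glue_lift.
rewrite koszul_diff_glue_last glue_setU1 dPsi1 /phi1' (koszul_prev_cochain_sign _ _ cpsi0).
by ring.
Qed.

End KoszulAdjoin.

Section Concat.
Variables (U : Type) (m n : nat).

Definition catf (y : 'I_m -> U) (x : 'I_n -> U) : 'I_(m + n) -> U :=
  fun i => match split i with inl j => y j | inr k => x k end.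

Lemma catf_l y x (j : 'I_m) : catf y x (lshift n j) = y j.
Proof. by rewrite /catf (unsplitK (inl _)). Qed.

Lemma catf_r y x (k : 'I_n) : catf y x (rshift m k) = x k.
Proof. by rewrite /catf (unsplitK (inr _)). Qed.

End Concat.

Lemma catf_map (U V : Type) (h : U -> V) m n (y : 'I_m -> U) (x : 'I_n -> U) :
  (fun i => h (catf y x i)) = catf (fun j => h (y j)) (fun k => h (x k)).
Proof. by apply: functional_extensionality => i; rewrite /catf; case: split. Qed.

Lemma catf0 (U : Type) n (y : 'I_0 -> U) (x : 'I_n -> U) : catf y x = x.
Proof.
apply: functional_extensionality => i.
by rewrite [in catf y x i](_ : i = rshift 0 i) ?catf_r //; apply: val_inj.
Qed.

Lemma catf_cons (U : Type) m n (y : 'I_m.+1 -> U) (x : 'I_n -> U) :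
  catf y x = insert_at ord0 (catf (fun j => y (lift ord0 j)) x) (y ord0).
Proof.
apply: functional_extensionality => i; rewrite /insert_at; case: unliftP => [j|] ->.
  case: (splitP j) => [a|b] ja.
    rewrite (_ : j = lshift n a) ?catf_l; last exact: val_inj.
    by rewrite (_ : lift _ _ = lshift n (lift ord0 a)) ?catf_l //; apply: val_inj.
  rewrite (_ : j = rshift m b) ?catf_r; last exact: val_inj.
  by rewrite (_ : lift _ _ = rshift m.+1 b) ?catf_r //; apply: val_inj.
by rewrite (_ : ord0 = lshift n (@ord0 m)) ?catf_l //; apply: val_inj.
Qed.

Section KgradeSeqMono.
Variables (T : comPzRingType) (M Sr : T -> Prop).
Hypothesis M0 : M 0.
Hypothesis MD : forall u v, M u -> M v -> M (u + v).
Hypothesis MN : forall u, M u -> M (- u).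
Hypothesis SM : forall s u, Sr s -> M u -> M (s * u).
Hypothesis S0 : Sr 0.
Hypothesis S1 : Sr 1.

Local Notation gk := (Kgrade_seq (fun r : T => r) M).

Definition in_span n (x : 'I_n -> T) (t : T) : Prop :=
  exists2 c : 'I_n -> T, (forall k, Sr (c k)) & t = \sum_k c k * x k.

Lemma in_span_self n (x : 'I_n -> T) j : in_span x (x j).
Proof.
exists (fun k => (k == j)%:R); first by move=> k; case: eqP.
by rewrite (bigD1 j) //= eqxx mul1r big1 ?addr0 // => k /negbTE ->; rewrite mul0r.
Qed.

Lemma in_span_catl m n (y : 'I_m -> T) (x : 'I_n -> T) t : in_span y t -> in_span (catf y x) t.
Proof.
case=> c Sc ->; exists (catf c (fun _ => 0)) => [i|]; first by rewrite /catf; case: split.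
rewrite big_split_ord /= [X in _ + X]big1 ?addr0 => [|i _]; last by rewrite catf_r mul0r.
by apply: eq_bigr => i _; rewrite !catf_l.
Qed.

Lemma in_span_catr m n (y : 'I_m -> T) (x : 'I_n -> T) t : in_span x t -> in_span (catf y x) t.
Proof.
case=> c Sc ->; exists (catf (fun _ => 0) c) => [i|]; first by rewrite /catf; case: split.
rewrite big_split_ord /= [X in X + _]big1 ?add0r => [|i _]; last by rewrite catf_l mul0r.
by apply: eq_bigr => i _; rewrite !catf_r.
Qed.

Lemma Kgrade_seq_adjoin n (x : 'I_n -> T) z : Sr z -> ele (gk x) (gk (insert_at ord_max x z)).
Proof.
move=> Sz; apply: ele_Some_ext => k /Kgrade_seq_geP kmin; apply/Kgrade_seq_geP => i nzi.
have [/kmin k_prev|/kmin //] : koszul_cohom_nonzero id M x i.-1 \/ koszul_cohom_nonzero id M x i.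
  apply: NNPP => /not_or_and [z_prev z_i].
  exact: (koszul_cohom_zero_adjoin M0 MD MN SM Sz z_prev z_i nzi).
exact: leq_trans k_prev (leq_pred i).
Qed.

Lemma Kgrade_seq_adjoin_span n (x c : 'I_n -> T) : (forall k, Sr (c k)) ->
  ele (gk (insert_at ord0 x (\sum_k c k * x k))) (gk x).
Proof.
move=> Sc; apply: ele_Some_ext => k /Kgrade_seq_geP kmin; apply/Kgrade_seq_geP => i nzi.
exact/kmin/(koszul_cohom_nonzero_adjoin_span M0 MD MN SM).
Qed.

Lemma Kgrade_seq_val_eq m l (y : 'I_m -> T) (w : 'I_l -> T) : m = l ->
  (forall (i : 'I_l) (j : 'I_m), i = j :> nat -> w i = y j) -> gk y = gk w.
Proof.
move=> ml; subst m => wy; congr Kgrade_seq.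
by apply: functional_extensionality => i; rewrite (wy i i).
Qed.

Lemma Kgrade_seq_prefix m (y : 'I_m -> T) l (w : 'I_l -> T) :
  (forall i, Sr (w i)) -> (m <= l)%N ->
  (forall (i : 'I_l) (j : 'I_m), i = j :> nat -> w i = y j) -> ele (gk y) (gk w).
Proof.
elim: l w => [|l IH] w Sw ml wy.
  by rewrite leqn0 in ml; rewrite (Kgrade_seq_val_eq (eqP ml) wy); apply: ele_refl.
case: (ltngtP m l.+1) ml => // [ml _|ml _]; last first.
  by rewrite (Kgrade_seq_val_eq ml wy); apply: ele_refl.
apply: ele_trans (IH (fun i => w (lift ord_max i)) _ ml _) _ => [i|i j ij|].
- exact: Sw.
- by apply: wy; rewrite val_lift_max.
by rewrite -[X in ele _ (gk X)](insert_atE ord_max); apply: Kgrade_seq_adjoin.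
Qed.

Lemma Kgrade_seq_catl m n (y : 'I_m -> T) (x : 'I_n -> T) :
  (forall j, Sr (y j)) -> (forall k, Sr (x k)) -> ele (gk y) (gk (catf y x)).
Proof.
move=> Sy Sx; apply: Kgrade_seq_prefix (leq_addr n m) _ => [i|i j ij].
  by rewrite /catf; case: split.
by rewrite (_ : i = lshift n j) ?catf_l //; apply: val_inj.
Qed.

Lemma Kgrade_seq_cat_span m n (y : 'I_m -> T) (x : 'I_n -> T) :
  (forall j, in_span x (y j)) -> ele (gk (catf y x)) (gk x).
Proof.
elim: m y => [|m IH] y yx; first by rewrite catf0; apply: ele_refl.
rewrite catf_cons; have [c Sc ->] := in_span_catr (fun j => y (lift ord0 j)) (yx ord0).
by apply: ele_trans (IH _ (fun j => yx _)); apply: Kgrade_seq_adjoin_span.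
Qed.

Lemma Kgrade_seq_mono m n (y : 'I_m -> T) (x : 'I_n -> T) :
  (forall j, Sr (y j)) -> (forall k, Sr (x k)) -> (forall j, in_span x (y j)) ->
  ele (gk y) (gk x).
Proof. by move=> Sy Sx yx; apply: ele_trans (Kgrade_seq_catl Sy Sx) (Kgrade_seq_cat_span yx). Qed.

End KgradeSeqMono.

Section IdealFacts.
Variables (R : comPzRingType) (I : R -> Prop).
Hypothesis HI : is_ideal I.

Lemma ideal0 : I 0. Proof. by case: HI. Qed.
Lemma idealD u v : I u -> I v -> I (u + v). Proof. by case: HI => _ [+ _]; apply. Qed.
Lemma idealMl r u : I u -> I (r * u). Proof. by case: HI => _ [_]; apply. Qed.
Lemma idealN u : I u -> I (- u). Proof. by move=> Iu; rewrite -mulN1r; apply: idealMl. Qed.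

End IdealFacts.

Lemma Kgrade_seq_catl_ring (A : comPzRingType) m n (x : 'I_m -> A) (y : 'I_n -> A) :
  ele (Kgrade_seq (fun r : A => r) (fun _ => True) x)
      (Kgrade_seq (fun r : A => r) (fun _ => True) (catf x y)).
Proof.
exact: (@Kgrade_seq_catl A _ (fun _ => True) I (fun _ _ _ _ => I) (fun _ _ => I)
  (fun _ _ _ _ => I)).
Qed.

Lemma Kgrade_seq_catr_ideal (A B : comPzRingType) (f : A -> B) (J : B -> Prop) :
  is_ideal J -> forall m n (x : 'I_m -> A) (y : 'I_n -> A),
  ele (Kgrade_seq f J y) (Kgrade_seq f J (catf x y)).
Proof.
move=> HJ m n x y; rewrite !Kgrade_seq_comp.
apply: (@Kgrade_seq_mono B J (fun _ => True) (ideal0 HJ) (idealD HJ) (idealN HJ)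
  (fun s u _ => @idealMl _ _ HJ s u) I) => // k.
by rewrite -(catf_r x); apply: (in_span_self I I (fun i => f (catf x y i))).
Qed.

Section Amalgamation.
Variables (A B : comPzRingType) (f : {rmorphism A -> B}) (J : B -> Prop).
Hypothesis HJ : is_ideal J.

Local Notation am := (amalg f J).
Local Notation KgradeA := (Kgrade (fun r : A => r) (fun _ => True)).
Local Notation gkA := (Kgrade_seq (fun r : A => r) (fun _ => True)).
Local Notation gk_am := (Kgrade_seq (fun z : A * B => z) am).

Definition iota_amalg (a : A) : A * B := (a, f a).

Lemma amalg_iota a : am (iota_amalg a).
Proof. by exists 0; split; [apply: ideal0 | rewrite addr0]. Qed.

Lemma amalg0 : am 0.
Proof. by have := amalg_iota 0; rewrite /iota_amalg rmorph0. Qed.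

Lemma amalg1 : am 1.
Proof. by have := amalg_iota 1; rewrite /iota_amalg rmorph1. Qed.

Lemma amalgD u v : am u -> am v -> am (u + v).
Proof.
case=> j [Jj uj] [k [Jk vk]]; exists (j + k); split; first exact: idealD.
by rewrite /= uj vk rmorphD; ring.
Qed.

Lemma amalgN u : am u -> am (- u).
Proof. by case=> j [Jj uj]; exists (- j); split; [apply: idealN | rewrite /= uj rmorphN opprD]. Qed.

Lemma amalgM u v : am u -> am v -> am (u * v).
Proof.
case=> j [Jj uj] [k [Jk vk]]; exists (f u.1 * k + (f v.1 * j + j * k)).
by split; [do ![apply: idealD | apply: idealMl] | rewrite /= uj vk rmorphM; ring].
Qed.

(* The isomorphism A ⊕ J ≅ A ⋈^f J, (a, j) ↦ (a, f a + j), on cochains. *)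
Definition amalg_cochain l (a : {set 'I_l} -> A) (b : {set 'I_l} -> B) : {set 'I_l} -> A * B :=
  fun Y => (a Y, f (a Y) + b Y).

Lemma amalg_cochainE l (psi : {set 'I_l} -> A * B) :
  amalg_cochain (fun Y => (psi Y).1) (fun Y => (psi Y).2 - f (psi Y).1) = psi.
Proof.
apply: functional_extensionality => Y; rewrite /amalg_cochain.
by case: (psi Y) => u v /=; rewrite addrC subrK.
Qed.

Lemma amalg_cochain_eq0 l (a : {set 'I_l} -> A) b Y :
  amalg_cochain a b Y = 0 <-> a Y = 0 /\ b Y = 0.
Proof.
rewrite /amalg_cochain; split => [[a0]|[-> ->]]; last by rewrite rmorph0 addr0.
by rewrite a0 rmorph0 add0r.
Qed.

Lemma amalg_cochain_mem l (a : {set 'I_l} -> A) b Y : am (amalg_cochain a b Y) <-> J (b Y).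
Proof. by split => [[j [Jj /addrI ->]] | Jb] //; exists (b Y). Qed.

Lemma koszul_diff_amalg_cochain l (x : 'I_l -> A) a b S :
  koszul_diff id (fun k => iota_amalg (x k)) (amalg_cochain a b) S =
  amalg_cochain (koszul_diff id x a) (koszul_diff f x b) S.
Proof.
rewrite [LHS]surjective_pairing /amalg_cochain /koszul_diff (rmorph_sum fst) (rmorph_sum snd).
congr pair; first by apply: eq_bigr => j _; rewrite !(rmorphM fst) (rmorph_sign fst).
rewrite rmorph_sum -big_split; apply: eq_bigr => j _ /=.
by rewrite (rmorph_sign snd) !rmorphM rmorph_sign; ring.
Qed.

Lemma amalg_cochain_inj l (a a' : {set 'I_l} -> A) b b' Y :
  amalg_cochain a b Y = amalg_cochain a' b' Y <-> a Y = a' Y /\ b Y = b' Y.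
Proof. by rewrite /amalg_cochain; split => [[eqa]|[-> ->] //]; rewrite eqa => /addrI ->. Qed.

Section Cochains.
Variables (l : nat) (a : {set 'I_l} -> A) (b : {set 'I_l} -> B).

Lemma koszul_cocycle_amalg (x : 'I_l -> A) :
  koszul_cocycle id (fun k => iota_amalg (x k)) (amalg_cochain a b) <->
  koszul_cocycle id x a /\ koszul_cocycle f x b.
Proof.
rewrite /koszul_cocycle; setoid_rewrite koszul_diff_amalg_cochain.
by setoid_rewrite amalg_cochain_eq0; split => [z|[za zb] S]; [split => S; case: (z S) | split].
Qed.

Lemma amalg_cochain_support (P : {set 'I_l} -> Prop) :
  (forall S, am (amalg_cochain a b S)) /\ (forall S, P S -> amalg_cochain a b S = 0) <->
  ((forall S : {set 'I_l}, True) /\ (forall S, P S -> a S = 0)) /\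
  ((forall S, J (b S)) /\ (forall S, P S -> b S = 0)).
Proof.
setoid_rewrite amalg_cochain_mem; setoid_rewrite amalg_cochain_eq0.
split => [[Mb z]|[[_ za] [Mb zb]]]; last by split => // S hS; split; [apply: za | apply: zb].
by split; split => // S /z [].
Qed.

Lemma koszul_cochain_amalg i :
  koszul_cochain am i (amalg_cochain a b) <->
  koszul_cochain (fun _ => True) i a /\ koszul_cochain J i b.
Proof. exact: amalg_cochain_support. Qed.

Lemma koszul_prev_cochain_amalg i :
  koszul_prev_cochain am i (amalg_cochain a b) <->
  koszul_prev_cochain (fun _ => True) i a /\ koszul_prev_cochain J i b.
Proof. exact: amalg_cochain_support. Qed.

End Cochains.

Lemma koszul_cohom_zero_amalg l (x : 'I_l -> A) i :
  ~ koszul_cohom_nonzero id am (fun k => iota_amalg (x k)) i <->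
  ~ koszul_cohom_nonzero id (fun _ => True) x i /\ ~ koszul_cohom_nonzero f J x i.
Proof.
have J0 := ideal0 HJ; have cochain0 : koszul_cochain J i (fun _ : {set 'I_l} => 0) by [].
split => [/(koszul_cohom_zeroP _ amalg0) ex_am|[]].
  split; [apply/(koszul_cohom_zeroP _ I) => a ca za | apply/(koszul_cohom_zeroP _ J0) => b cb zb].
    have [||Psi] := ex_am (amalg_cochain a (fun _ => 0)).
    - exact/koszul_cochain_amalg.
    - by apply/koszul_cocycle_amalg; split => //; apply: koszul_cocycle0.
    rewrite -(amalg_cochainE Psi) => /koszul_prev_cochain_amalg [cPsi _] dPsi.
    exists (fun S => (Psi S).1) => // S; have := dPsi S.
    by rewrite koszul_diff_amalg_cochain => /amalg_cochain_inj [].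
  have [||Psi] := ex_am (amalg_cochain (fun _ => 0) b).
  - exact/koszul_cochain_amalg.
  - by apply/koszul_cocycle_amalg; split => //; apply: koszul_cocycle0.
  rewrite -(amalg_cochainE Psi) => /koszul_prev_cochain_amalg [_ cPsi] dPsi.
  exists (fun S => (Psi S).2 - f (Psi S).1) => // S; have := dPsi S.
  by rewrite koszul_diff_amalg_cochain => /amalg_cochain_inj [].
move=> /(koszul_cohom_zeroP _ I) exA /(koszul_cohom_zeroP _ J0) exJ.
apply/(koszul_cohom_zeroP _ amalg0) => phi; rewrite -(amalg_cochainE phi).
case/koszul_cochain_amalg => ca cb /koszul_cocycle_amalg [za zb].
have [psiA cpsiA dpsiA] := exA _ ca za; have [psiJ cpsiJ dpsiJ] := exJ _ cb zb.
exists (amalg_cochain psiA psiJ); first exact/koszul_prev_cochain_amalg.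
by move=> S; rewrite koszul_diff_amalg_cochain; apply/amalg_cochain_inj.
Qed.

Lemma Kgrade_seq_amalg l (x : 'I_l -> A) k :
  ele (Some k) (gk_am (fun j => iota_amalg (x j))) <->
  ele (Some k) (gkA x) /\ ele (Some k) (Kgrade_seq f J x).
Proof.
rewrite !Kgrade_seq_geP; split => [kmin|[kA kJ] i nzi].
  split => i nzi; apply: kmin; apply: NNPP => /koszul_cohom_zero_amalg [zA zJ].
    exact: zA nzi.
  exact: zJ nzi.
have [/kA|/kJ] // : koszul_cohom_nonzero id (fun _ => True) x i \/ koszul_cohom_nonzero f J x i.
by apply: NNPP => /not_or_and /koszul_cohom_zero_amalg/(_ nzi).
Qed.

Lemma ext_ideal_amalg a y : ext_ideal f J a y -> am y.
Proof.
case=> n [u [s [_ [s_am ->]]]]; apply: (big_ind am) => [||i _].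
- exact: amalg0.
- exact: amalgD.
exact: amalgM (amalg_iota (u i)) (s_am i).
Qed.

Lemma ext_ideal_iota (a : A -> Prop) u : a u -> ext_ideal f J a (iota_amalg u).
Proof.
move=> au; exists 1%N, (fun _ => u), (fun _ => 1); do !split => //.
  by move=> _; apply: amalg1.
by rewrite big_ord1 mulr1.
Qed.

Lemma ext_ideal_span (a : A -> Prop) l (y : 'I_l -> A * B) :
  (forall j, ext_ideal f J a (y j)) ->
  exists n (u : 'I_n -> A),
    (forall k, a (u k)) /\ forall j, in_span am (fun k => iota_amalg (u k)) (y j).
Proof.
elim: l y => [|l IH] y ya; first by exists 0%N, (fun _ => 0); split => -[].
have [n1 [u1 [u1a span1]]] := IH (fun j => y (lift ord0 j)) (fun j => ya _).
have [n0 [u0 [s0 [u0a [s0a y0]]]]] := ya ord0.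
exists (n0 + n1)%N, (catf u0 u1); split => [k|j]; first by rewrite /catf; case: split.
rewrite catf_map; case: (unliftP ord0 j) => [j' ->|->].
  exact/in_span_catr/span1/amalg0.
apply/in_span_catl; first exact: amalg0.
by exists s0 => //; rewrite y0; apply: eq_bigr => i _; apply: mulrC.
Qed.

Lemma Kgrade_ext_ideal_le (a : A -> Prop) :
  ele (Kgrade (fun z : A * B => z) am (ext_ideal f J a)) (KgradeA a).
Proof.
apply: Kgrade_le => l y ya; have [n [u [ua yu]]] := ext_ideal_span ya.
apply: ele_trans (Kgrade_seq_le_Kgrade _ _ ua).
apply: (@ele_trans (gk_am (fun k => iota_amalg (u k)))).
  apply: (Kgrade_seq_mono amalg0 amalgD amalgN amalgM amalg0) => // j.
    exact: ext_ideal_amalg (ya j).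
  exact: amalg_iota.
by apply: ele_Some_ext => k /Kgrade_seq_amalg [].
Qed.

Lemma Kgrade_ext_ideal_ge (a : A -> Prop) :
  ele (KgradeA a) (Kgrade f J a) ->
  ele (KgradeA a) (Kgrade (fun z : A * B => z) am (ext_ideal f J a)).
Proof.
move=> AJ; apply: Kgrade_le => l x xa; apply: ele_Some_ext => k kx.
have kA := ele_trans kx (Kgrade_seq_le_Kgrade _ _ xa).
have [l2 [x2 [x2a kx2]]] := Kgrade_geP (ele_trans kA AJ).
have xx2a j : a (catf x x2 j) by rewrite /catf; case: split.
apply: ele_trans (Kgrade_seq_le_Kgrade _ _ (fun j => ext_ideal_iota (xx2a j))).
apply/Kgrade_seq_amalg; split; first exact: ele_trans kx (Kgrade_seq_catl_ring x x2).
exact: ele_trans kx2 (Kgrade_seq_catr_ideal f HJ x x2).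
Qed.

Lemma Kgrade_ext_ideal (a : A -> Prop) :
  ele (KgradeA a) (Kgrade f J a) ->
  Kgrade (fun z : A * B => z) am (ext_ideal f J a) = KgradeA a.
Proof.
by move=> AJ; apply: ele_anti; [apply: Kgrade_ext_ideal_le | apply: Kgrade_ext_ideal_ge].
Qed.

End Amalgamation.

Lemma Kgrade_ext_ideal_CM (A B : comPzRingType) (f : {rmorphism A -> B}) (J : B -> Prop)
    (C : (A -> Prop) -> Prop) :
  is_ideal J -> CM_in C -> (forall a, C a -> ele (height a) (Kgrade f J a)) ->
  forall a, C a ->
    Kgrade (fun z : A * B => z) (amalg f J) (ext_ideal f J a)
      = Kgrade (fun r : A => r) (fun _ => True) a /\
    ele (Kgrade (fun r : A => r) (fun _ => True) a) (Kgrade f J a).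
Proof.
move=> HJ CM htJ a Ca; have AJ : ele (Kgrade (fun r : A => r) (fun _ => True) a) (Kgrade f J a).
  by rewrite -(CM a Ca); apply: htJ.
by split => //; apply: Kgrade_ext_ideal.
Qed.

Theorem lemma3p2 (A B : comPzRingType) (f : {rmorphism A -> B}) (J : B -> Prop)
  (HJ : is_ideal J) :
  (CM_in (@is_ideal A) ->
   (forall a : A -> Prop, is_ideal a -> ele (height a) (Kgrade f J a)) ->
   forall a : A -> Prop, is_ideal a ->
     Kgrade (fun z : A * B => z) (amalg f J) (ext_ideal f J a)
       = Kgrade (fun r : A => r) (fun _ => True) a /\
     ele (Kgrade (fun r : A => r) (fun _ => True) a) (Kgrade f J a))
  /\
  (CM_in (@fg_ideal A) ->
   (forall a : A -> Prop, fg_ideal a -> ele (height a) (Kgrade f J a)) ->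
   forall a : A -> Prop, fg_ideal a ->
     Kgrade (fun z : A * B => z) (amalg f J) (ext_ideal f J a)
       = Kgrade (fun r : A => r) (fun _ => True) a /\
     ele (Kgrade (fun r : A => r) (fun _ => True) a) (Kgrade f J a)).
Proof. by split; apply: Kgrade_ext_ideal_CM. Qed.
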